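(* Let $G$ be a graph with vertex set $[n]$. Distinct $G$-reduced noncrossing trees on $[n]$ have distinct signatures.
   Context: A graph on $[n]$ is noncrossing if it has no two edges $\overline{ac},\overline{bd}$ with $a<b<c<d$. A noncrossing tree $T$ on $[n]$ is $G$-reduced if $T\subset G$ and there do not exist $1\le i_1<i_2<\dots<i_m\le n$ such that $\overline{i_1i_m}\in T$, $\overline{i_{j-1}i_j}\in T$ for all $1<j<m$, $\overline{i_{m-1}i_m}\in G$, and $T\cup\overline{i_{m-1}i_m}$ is noncrossing. The signature of a noncrossing tree $T$ on $[n]$ is the sequence $s(T)=(s_1,\dots,s_n)$ defined by $s_1=1$ and, for $i>1$: $s_i=s_j$ where $j<i$ is the minimum vertex with $\overline{ji}\in T$, if such $j$ exists; otherwise $s_i=s_{i-1}+1$. *)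

(* Vertices [n] = {1,..,n} are modelled by 'I_n = {0,..,n-1}
   (order-preserving shift by one). An (undirected, simple) graph on [n] is a
   set of pairs (a,b) with a < b; the pair (a,b) is the edge {a,b}. *)
From mathcomp Require Import all_boot.
Set Implicit Arguments.
Unset Strict Implicit.
Unset Printing Implicit Defensive.

Section Defs.
Variable n : nat.
Notation V := 'I_n.

Definition graph_wf (E : {set V * V}) : bool :=
  [forall e in E, e.1 < e.2].

Definition adj (E : {set V * V}) : rel V :=
  fun a b => ((a, b) \in E) || ((b, a) \in E).

Definition connected (E : {set V * V}) : bool :=
  [forall a : V, forall b : V, connect (adj E) a b].

Definition is_tree (T : {set V * V}) : bool :=
  [&& graph_wf T, connected T &
      [forall e in T, ~~ connect (adj (T :\ e)) e.1 e.2]].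

Definition noncrossing (E : {set V * V}) : bool :=
  [forall e in E, forall f in E,
     ~~ [&& e.1 < f.1, f.1 < e.2 & e.2 < f.2]].

Definition noncrossing_tree (T : {set V * V}) : bool :=
  is_tree T && noncrossing T.

(* G-reduced: T \subset G and there is no increasing sequence
   i_1 < ... < i_m (m >= 3) with i_1 i_m in T, i_{j-1} i_j in T for 1<j<m,
   i_{m-1} i_m in G, and T + i_{m-1} i_m noncrossing. *)
Definition reducing_seq (G T : {set V * V}) (s : seq V) : Prop :=
  exists (x : V) (mid : seq V) (y z : V),
    [/\ s = x :: rcons (rcons mid y) z,
        sorted (fun a b : V => a < b) s,
        (x, z) \in T &
        [/\
        path (fun a b : V => (a, b) \in T) x (rcons mid y),
        (y, z) \in G &
        noncrossing (T :|: [set (y, z)])]].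

Definition G_reduced (G T : {set V * V}) : Prop :=
  T \subset G /\ ~ (exists s : seq V, reducing_seq G T s).

(* signature, 0-based positions: value at position k (vertex k+1) *)
Definition edgeN (T : {set V * V}) (a b : nat) : bool :=
  [exists e in T, (val e.1 == a) && (val e.2 == b)].

Fixpoint sig_seq (T : {set V * V}) (k : nat) : seq nat :=
  match k with
  | 0 => [::]
  | k'.+1 =>
      let s := sig_seq T k' in
      rcons s
        (if k' == 0 then 1
         else let j := find (fun j => edgeN T j k') (iota 0 k') in
              if j < k' then nth 0 s j else (last 0 s).+1)
  end.

Definition signature (T : {set V * V}) : seq nat := sig_seq T n.

End Defs.

From mathcomp Require Import all_boot zify.

Set Implicit Arguments.
Unset Strict Implicit.
Unset Printing Implicit Defensive.

(* Suppose T1 <> T2 have the same signature and let k be the least right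
   endpoint of an edge in exactly one of them, so that T1 and T2 agree on all
   edges below k. The signature of a vertex is that of its least left
   neighbour, or one more than that of its predecessor when it has none; this
   makes the signature weakly increasing along vertices not covered by an edge
   below k, strictly so unless the two vertices are joined in the common forest
   below k. Hence the least left neighbours of k in T1 and T2 are joined below
   k, and so is a left neighbour of k present in only one tree with a left
   neighbour of k in the other. A Jordan-curve argument for noncrossing graphs
   shows that the (shortest) path joining two such neighbours a < b below k is
   increasing; with the chords ak and bk it is a reducing sequence, against
   G-reducedness. *)

(* [in_arc x y w]: [w] lies in the half-open interval between [x] and [y],
   whose right end is included. A chord [xy] separates the vertices [u] and
   [v], none of them an endpoint, iff exactly one of them is in that arc. *)
Definition in_arc (x y w : nat) : bool := (x < w) != (y < w).

Definition separates (x y u v : nat) : bool := in_arc x y u != in_arc x y v.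

Lemma separates_split x y u w v :
  separates x y u v = (separates x y u w != separates x y w v).
Proof.
by rewrite /separates; case: (in_arc x y u); case: (in_arc x y w); case: (in_arc x y v).
Qed.

Lemma separates_in_out x y u v : x < u -> u <= y -> y < v -> separates x y u v.
Proof. rewrite /separates /in_arc; lia. Qed.

Lemma separates_out_in x y u v : u < x -> x < v -> v <= y -> separates x y u v.
Proof. rewrite /separates /in_arc; lia. Qed.

Section NoncrossingTrees.

Variable n : nat.
Notation V := 'I_n.
Implicit Types (E T G : {set V * V}).

Lemma graph_wf_lt E e : graph_wf E -> e \in E -> e.1 < e.2.
Proof. by move=> /forallP wfE eE; have := wfE e; rewrite eE. Qed.

Lemma noncrossingP E e f :
  noncrossing E -> e \in E -> f \in E -> ~~ [&& e.1 < f.1, f.1 < e.2 & e.2 < f.2].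
Proof.
by move=> /forallP ncE eE fE; have := ncE e; rewrite eE => /forallP/(_ f); rewrite fE.
Qed.

Lemma exists_min_neighbor T (v k : V) :
  (v, k) \in T -> exists2 p : V, (p, k) \in T & forall u, (u, k) \in T -> p <= u.
Proof.
move=> vk; case: (arg_minnP (P := fun u => (u, k) \in T) val vk) => p pk pmin.
by exists p.
Qed.

Definition adj_below T (k : nat) : rel V := fun x y => [&& adj T x y, x < k & y < k].

Definition conn_below T (k : nat) : rel V := connect (adj_below T k).

Definition agree_below T1 T2 (k : nat) :=
  forall u v : V, v < k -> ((u, v) \in T1) = ((u, v) \in T2).

Lemma agree_below_sym T1 T2 k : agree_below T1 T2 k -> agree_below T2 T1 k.
Proof. by move=> ag u v vk; rewrite ag. Qed.

Lemma adj_below_sym T k : symmetric (adj_below T k).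
Proof.
by move=> x y; rewrite /adj_below /adj orbC; case: (x < k); case: (y < k); rewrite ?andbF.
Qed.

Lemma conn_below_sym T k x y : conn_below T k x y = conn_below T k y x.
Proof. exact: (sym_connect_sym (@adj_below_sym T k)). Qed.

Lemma adj_below_sub T k : subrel (adj_below T k) (adj T).
Proof. by move=> x y /and3P[]. Qed.

Lemma adj_below_agree T1 T2 k : agree_below T1 T2 k -> adj_below T1 k =2 adj_below T2 k.
Proof.
move=> ag x y; rewrite /adj_below; case xk: (x < k); case yk: (y < k); rewrite ?andbF //.
by rewrite /adj !ag.
Qed.

Lemma conn_below_agree T1 T2 k : agree_below T1 T2 k -> conn_below T1 k =2 conn_below T2 k.
Proof. by move=> ag; apply: eq_connect; apply: adj_below_agree. Qed.

Lemma path_adj_below T k (x : V) r :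
  path (adj T) x r -> all (fun y : V => y < k) (x :: r) -> path (adj_below T k) x r.
Proof.
elim: r x => [|y r IH] x //= /andP[xy yr] /and3P[xk yk rk].
by rewrite /adj_below xy xk yk IH //= yk.
Qed.

Lemma path_below_lt T k (x : V) p : path (adj_below T k) x p -> {in p, forall w : V, w < k}.
Proof.
elim: p x => [|y p IH] x //= /andP[/and3P[_ _ yk] yp] w.
by rewrite inE => /orP[/eqP -> // | wp]; apply: IH yp w wp.
Qed.

Lemma conn_below_path T k (a b : V) :
  conn_below T k a b ->
  exists p, [/\ path (adj_below T k) a p, uniq (a :: p) & last a p = b].
Proof. by case/connectP => p0 /shortenP[p ap uap _] ->; exists p. Qed.

Lemma path_first_exit T (k : nat) (x : V) p :
  x < k -> path (adj T) x p -> k <= last x p ->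
  exists r w, [/\ path (adj T) x (rcons r w), all (fun y : V => y < k) (x :: r) & k <= w].
Proof.
elim: p x => [|y p IH] x /= xk; first by rewrite leqNgt xk.
case/andP=> xy yp lastk; case: (leqP k y) => ky.
  by exists [::], y; rewrite /= xy xk ky.
have [r [w [yrw rk kw]]] := IH y ky yp lastk.
by exists (y :: r), w; rewrite /= xy yrw xk.
Qed.

Section Chords.

Variable E : {set V * V}.
Hypotheses (wfE : graph_wf E) (ncE : noncrossing E).

Lemma adj_not_separates (x x1 u u1 : V) :
  adj E x x1 -> adj E u u1 ->
  x != u -> x != u1 -> x1 != u -> x1 != u1 -> ~~ separates x x1 u u1.
Proof.
move=> xx1 uu1; rewrite -!val_eqE /=.
have W := graph_wf_lt wfE; have N := noncrossingP ncE.
case/orP: xx1 => xx1; case/orP: uu1 => uu1;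
move: (N _ _ xx1 uu1) (N _ _ uu1 xx1) (W _ xx1) (W _ uu1) => /=;
rewrite /separates /in_arc; lia.
Qed.

(* A discrete Jordan curve theorem: separation by the chord composes along the
   path, and no single edge of a noncrossing graph changes it. *)
Lemma path_not_separates (x x1 u : V) q :
  adj E x x1 -> path (adj E) u q -> x \notin u :: q -> x1 \notin u :: q ->
  ~~ separates x x1 u (last u q).
Proof.
move=> xx1; elim: q u => [|u1 q IH] u /=.
  by move=> _ _ _; rewrite /separates eqxx.
case/andP=> uu1 u1q; rewrite !inE !negb_or => /and3P[xu xu1 xq] /and3P[x1u x1u1 x1q].
rewrite (separates_split _ _ _ u1) (negbTE (adj_not_separates xx1 uu1 xu xu1 x1u x1u1)).
by rewrite (negbTE (IH u1 u1q _ _)) // inE negb_or ?xu1 ?x1u1.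
Qed.

Lemma sorted_path_in_range (x : V) p :
  path (adj E) x p -> uniq (x :: p) -> {in p, forall w : V, x < w <= last x p} ->
  sorted (fun a b : V => a < b) (x :: p).
Proof.
elim: p x => [|x1 p IH] x //= /andP[xx1 x1p] /andP[xNp up] range.
have /andP[lt_x_x1 le_x1_last] := range x1 (mem_head _ _).
have /andP[x1Np _] := up.
rewrite lt_x_x1; apply: IH (x1p) up _ => w wp.
have /andP[lt_xw ->] : x < w <= last x1 p by apply: range; rewrite inE wp orbT.
rewrite andbT ltnNge; apply/negP => le_w_x1.
move: x1p xNp x1Np le_x1_last; case/splitPr: wp => p1 p2.
rewrite cat_path last_cat /= => /and3P[_ _ wp2] xNp x1Np le_x1_last.
have xNw : x \notin w :: p2 by apply: contra xNp => h; rewrite inE mem_cat h !orbT.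
have x1Nw : x1 \notin w :: p2 by apply: contra x1Np => h; rewrite mem_cat h orbT.
have lt_x1_last : x1 < last w p2.
  rewrite ltn_neqAle le_x1_last andbT; apply/negP => /eqP/val_inj x1E.
  by rewrite x1E mem_last in x1Nw.
have := path_not_separates xx1 wp2 xNw x1Nw.
by rewrite (separates_in_out lt_xw le_w_x1 lt_x1_last).
Qed.

Lemma exists_neighbor_conn_below (c b k : V) :
  connected E -> (c, k) \in E -> c < b -> b < k ->
  exists2 a, (a, k) \in E & conn_below E k b a.
Proof.
move=> conE ck cb bk.
have /connectP[p bp pk] : connect (adj E) b k.
  by move/forallP: conE => /(_ b)/forallP/(_ k).
have [r [w [brw r_lt k_le_w]]] := path_first_exit bk bp (eq_leq (congr1 val pk)).
move: brw; rewrite rcons_path => /andP[br rw].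
have conn_r : {in b :: r, forall y, conn_below E k b y}.
  by move=> y; apply: path_connect; apply: path_adj_below.
move/allP: r_lt => r_lt.
case: (boolP (c \in b :: r)) => [cr | cNr]; first by exists c; last exact: conn_r.
case: (ltngtP k w) => [k_lt_w | w_lt_k | kw]; last first.
- have {kw} wk : w = k by apply: val_inj.
  exists (last b r); last exact: conn_r (mem_last b r).
  case/orP: rw; rewrite wk // => /(graph_wf_lt wfE) /=.
  by rewrite ltnNge ltnW // r_lt ?mem_last.
- by rewrite ltnNge k_le_w in w_lt_k.
- have ck' : adj E c k by rewrite /adj ck.
  have brw : path (adj E) b (rcons r w) by rewrite rcons_path br.
  have cN : c \notin b :: rcons r w.
    rewrite -rcons_cons mem_rcons inE negb_or cNr andbT.
    apply: contraTneq k_lt_w => <-; rewrite -leqNgt ltnW //.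
    exact: ltn_trans cb bk.
  have kN : k \notin b :: rcons r w.
    rewrite -rcons_cons mem_rcons inE negb_or; apply/andP; split.
      by apply: contraTneq k_lt_w => <-; rewrite ltnn.
    by apply/negP => /r_lt; rewrite ltnn.
  have := path_not_separates ck' brw cN kN.
  by rewrite last_rcons (separates_in_out cb (ltnW bk) k_lt_w).
Qed.

End Chords.

Lemma noncrossing_add_edge T1 T2 (a b k : V) :
  noncrossing T1 -> noncrossing T2 -> agree_below T1 T2 k ->
  (a, k) \in T1 -> (b, k) \in T2 -> a < b -> noncrossing (T1 :|: [set (b, k)]).
Proof.
move=> nc1 nc2 ag ak bk ab.
apply/forallP => e; apply/implyP; rewrite in_setU in_set1 => eE.
apply/forallP => f; apply/implyP; rewrite in_setU in_set1 => fE.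
case/orP: eE => [eT1 | /eqP ->]; case/orP: fE => [fT1 | /eqP ->].
- exact: noncrossingP nc1 eT1 fT1.
- apply/negP => /and3P[e1b be2 e2k].
  have eT2 : e \in T2 by case: e eT1 e1b be2 e2k => e1 e2 /= eT1 _ _ e2k; rewrite -ag.
  by have := noncrossingP nc2 eT2 bk; rewrite /= e1b be2 e2k.
- apply/negP => /= /and3P[bf1 f1k kf2].
  have := noncrossingP nc1 ak fT1; rewrite /= f1k kf2 andbT.
  by rewrite (ltn_trans ab bf1).
- by rewrite /= ltnn.
Qed.

Lemma path_below_gt T (k a b : V) p :
  graph_wf T -> noncrossing T -> (a, k) \in T -> a < b ->
  path (adj_below T k) a p -> uniq (a :: p) -> last a p = b -> {in p, forall w : V, a < w}.
Proof.
move=> wfT ncT ak ab ap uap pb w wp.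
have p_lt := path_below_lt ap.
have /andP[aNp _] := uap.
move: (sub_path (@adj_below_sub T k) ap) aNp pb p_lt.
case/splitPr: wp => p1 p2; rewrite cat_path last_cat /= => /and3P[_ _ wp2] aNp pb p_lt.
rewrite ltnNge; apply/negP => w_le_a.
have w_lt_a : w < a.
  rewrite ltn_neqAle w_le_a andbT; apply: contraNneq aNp => /val_inj ->.
  by rewrite mem_cat inE eqxx orbT.
have b_lt_k : b < k by rewrite -pb; apply: p_lt; rewrite mem_cat mem_last orbT.
have aN : a \notin w :: p2 by apply: contra aNp => aw; rewrite mem_cat aw orbT.
have kN : k \notin w :: p2.
  by apply/negP => kw; have := p_lt k; rewrite mem_cat kw orbT ltnn => /(_ isT).
have ak' : adj T a k by rewrite /adj ak.
have := path_not_separates wfT ncT ak' wp2 aN kN.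
by rewrite pb (separates_out_in w_lt_a ab (ltnW b_lt_k)).
Qed.

Lemma path_below_le T (k a b : V) p :
  graph_wf T -> noncrossing T -> (b, k) \in T -> a < b ->
  path (adj_below T k) a p -> uniq (a :: p) -> last a p = b -> {in p, forall w : V, w <= b}.
Proof.
move=> wfT ncT bk ab ap uap pb w wp.
have p_lt := path_below_lt ap.
have b_lt_k : b < k by have := graph_wf_lt wfT bk.
have w_lt_k := p_lt w wp.
move: (sub_path (@adj_below_sub T k) ap) uap pb p_lt.
case/splitPr: wp => p1 p2 ap' uap; rewrite last_cat /= => pb p_lt.
have aw : path (adj T) a (rcons p1 w) by move: ap'; rewrite -cat_rcons cat_path => /andP[].
rewrite leqNgt; apply/negP => b_lt_w.
have bN : b \notin a :: rcons p1 w.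
  have bp2 : b \in p2.
    have : b \in w :: p2 by rewrite -pb mem_last.
    by rewrite inE => /orP[/eqP bw | //]; rewrite bw ltnn in b_lt_w.
  move: uap; rewrite -cat_rcons -cat_cons cat_uniq => /and3P[_ /hasPn bN _].
  exact: bN.
have kN : k \notin a :: rcons p1 w.
  rewrite inE negb_or -val_eqE /= neq_ltn (ltn_trans ab b_lt_k) orbT /=.
  by apply/negP => kw; have := p_lt k; rewrite -cat_rcons mem_cat kw ltnn => /(_ isT).
have bk' : adj T b k by rewrite /adj bk.
have := path_not_separates wfT ncT bk' aw bN kN.
by rewrite last_rcons (separates_out_in ab b_lt_w (ltnW w_lt_k)).
Qed.

Lemma reducing_seq_of_sorted_path G T (a b k : V) p :
  graph_wf T -> (a, k) \in T -> (b, k) \in G -> b < k -> a < b ->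
  path (adj T) a p -> sorted (fun u v : V => u < v) (a :: p) -> last a p = b ->
  noncrossing (T :|: [set (b, k)]) -> exists s, reducing_seq G T s.
Proof.
move=> wfT ak bG bk ab ap srt.
case/lastP: p ap srt => [|mid y] ap srt; first by move=> /= ba; rewrite ba ltnn in ab.
rewrite last_rcons => yb; subst y => nc.
exists (a :: rcons (rcons mid b) k), a, mid, b, k; split => //.
  by rewrite /= rcons_path last_rcons bk andbT.
split => //.
have : path [rel u v | adj T u v && (u < v)] a (rcons mid b) by rewrite path_relI ap.
apply: sub_path => u v /andP[/orP[// | vu] uv].
by have := graph_wf_lt wfT vu; rewrite /= ltnNge ltnW.
Qed.

Lemma reducing_seq_of_conn_below G T1 T2 (k a b : V) :
  graph_wf T1 -> noncrossing T1 -> graph_wf T2 -> noncrossing T2 ->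
  agree_below T1 T2 k -> (a, k) \in T1 -> (b, k) \in T2 -> (b, k) \in G -> a < b ->
  conn_below T1 k a b -> exists s, reducing_seq G T1 s.
Proof.
move=> wf1 nc1 wf2 nc2 ag ak bk bG ab /conn_below_path[p [ap uap pb]].
have ap1 : path (adj T1) a p := sub_path (@adj_below_sub T1 k) ap.
have ap2 : path (adj_below T2 k) a p by rewrite -(eq_path (adj_below_agree ag)).
have range : {in p, forall w : V, a < w <= last a p}.
  move=> w wp; rewrite pb (path_below_gt wf1 nc1 ak ab ap uap pb wp) /=.
  exact: (path_below_le wf2 nc2 bk ab ap2 uap pb wp).
have srt := sorted_path_in_range wf1 nc1 ap1 uap range.
have b_lt_k : b < k by have := graph_wf_lt wf2 bk.
exact: reducing_seq_of_sorted_path wf1 ak bG b_lt_k ab ap1 srt pb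
  (noncrossing_add_edge nc1 nc2 ag ak bk ab).
Qed.

Definition sig_at T (v : nat) : nat := nth 0 (sig_seq T v.+1) v.

Lemma size_sig_seq T m : size (sig_seq T m) = m.
Proof. by elim: m => //= m IH; rewrite size_rcons IH. Qed.

Lemma nth_sig_seq T m j : j < m -> nth 0 (sig_seq T m) j = sig_at T j.
Proof.
elim: m => // m IH; rewrite ltnS leq_eqVlt => /orP[/eqP -> // | jm].
by rewrite /= nth_rcons size_sig_seq jm IH.
Qed.

Lemma sig_at_signature T1 T2 :
  signature T1 = signature T2 -> forall v, v < n -> sig_at T1 v = sig_at T2 v.
Proof. by move=> sigE v vn; rewrite -!(nth_sig_seq _ vn) -/(signature _) sigE. Qed.

Lemma sig_atE T v :
  sig_at T v = if v == 0 then 1 else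
    let j := find (fun j => edgeN T j v) (iota 0 v) in
    if j < v then sig_at T j else (sig_at T v.-1).+1.
Proof.
rewrite /sig_at /= nth_rcons size_sig_seq ltnn eqxx.
case: (v =P 0) => // /eqP v0 /=.
case: ifP => jv; first by rewrite nth_sig_seq.
by rewrite -nth_last size_sig_seq nth_sig_seq //; case: v v0 {jv}.
Qed.

Lemma edgeN_ord T (u v : V) : edgeN T u v = ((u, v) \in T).
Proof.
apply/existsP/idP => [[[e1 e2]] /andP[eT /andP[/eqP e1u /eqP e2v]] | uv].
  have -> : u = e1 by apply: val_inj.
  by have -> : v = e2 by apply: val_inj.
by exists (u, v); rewrite uv !eqxx.
Qed.

Lemma edgeN_exists T (j : nat) (v : V) : edgeN T j v -> exists2 u : V, val u = j & (u, v) \in T.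
Proof.
case/existsP => [[e1 e2]] /andP[eT /andP[/eqP e1j /eqP e2v]].
have -> : v = e2 by apply: val_inj.
by exists e1.
Qed.

Lemma sig_at_min_neighbor T (p v : V) :
  graph_wf T -> (p, v) \in T -> (forall u, (u, v) \in T -> p <= u) -> sig_at T v = sig_at T p.
Proof.
move=> wfT pv pmin; have p_lt_v : p < v by have := graph_wf_lt wfT pv.
rewrite sig_atE (_ : (v == 0 :> nat) = false); last by case: (nat_of_ord v) p_lt_v.
set P := fun j => edgeN T j v.
have hasP : has P (iota 0 v).
  by apply/hasP; exists (nat_of_ord p); rewrite ?mem_iota ?p_lt_v //= /P edgeN_ord.
have jv : find P (iota 0 v) < v by rewrite -[X in _ < X](size_iota 0 v) -has_find.
rewrite /= jv (_ : find P (iota 0 v) = p) //.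
apply/eqP; rewrite eqn_leq; apply/andP; split.
  rewrite leqNgt; apply/negP => pj.
  by have := before_find 0 pj; rewrite nth_iota // /P add0n edgeN_ord pv.
have := nth_find 0 hasP; rewrite nth_iota // add0n /P.
by case/edgeN_exists => u <- /pmin.
Qed.

Lemma sig_at_no_neighbor T (v : V) :
  (forall u, (u, v) \notin T) -> 0 < v -> sig_at T v = (sig_at T v.-1).+1.
Proof.
move=> none v_pos; rewrite sig_atE (_ : (v == 0 :> nat) = false) /=; last first.
  by case: (nat_of_ord v) v_pos.
have nhas : ~~ has (fun j => edgeN T j v) (iota 0 v).
  by apply/hasPn => j _; apply/negP => /edgeN_exists[u _ uv]; move: (none u); rewrite uv.
by rewrite /= (hasNfind nhas) size_iota ltnn.
Qed.

Definition exposed T (k v : nat) := forall u w : V, (u, w) \in T -> w < k -> ~~ (u < v < w).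

Lemma exposed_of_edge T (p k : V) : noncrossing T -> (p, k) \in T -> exposed T k p.
Proof.
move=> ncT pk u w uw wk; apply/negP => /andP[up pw].
by have := noncrossingP ncT uw pk; rewrite /= up pw wk.
Qed.

Lemma exposed_agree T1 T2 k v : agree_below T1 T2 k -> exposed T1 k v -> exposed T2 k v.
Proof. by move=> ag e u w uw wk; apply: (e u w _ wk); rewrite ag. Qed.

Lemma exposed_predn T k : exposed T k k.-1.
Proof. by move=> u w _ wk; apply/negP => /andP[_]; move: wk; clear; lia. Qed.

Lemma exposed_pred_no_neighbor T k (a : V) :
  exposed T k a -> (forall u, (u, a) \notin T) -> exposed T k a.-1.
Proof.
move=> ea none u w uw wk; apply/negP => /andP[ua wa].
case: (ltngtP w a) => [w_lt_a | a_lt_w | wa'].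
- by move: wa w_lt_a; clear; lia.
- by have := ea u w uw wk; rewrite a_lt_w andbT (leq_trans ua (leq_pred a)).
- by move: (none u); rewrite -(val_inj wa') uw.
Qed.

Lemma exposed_min_neighbor T k (p a : V) :
  noncrossing T -> exposed T k a -> (p, a) \in T -> p < a ->
  (forall u, (u, a) \in T -> p <= u) -> exposed T k p.
Proof.
move=> ncT ea pa p_lt_a pmin u w uw wk; apply/negP => /andP[up pw].
case: (ltngtP w a) => [w_lt_a | a_lt_w | wa].
- by have := noncrossingP ncT uw pa; rewrite /= up pw w_lt_a.
- by have := ea u w uw wk; rewrite /= (ltn_trans up p_lt_a) a_lt_w.
- by move: (pmin u); rewrite -(val_inj wa) uw => /(_ isT); rewrite leqNgt up.
Qed.

Section Monotonicity.

Variable T : {set V * V}.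
Hypotheses (wfT : graph_wf T) (ncT : noncrossing T).

(* Follow the chain of least left neighbours (or predecessors) from [a] down
   to [a']: each step keeps the signature or lowers it by one, and a step
   through a neighbour stays in the forest below [k]. *)
Lemma sig_at_exposed_mono k (a a' : V) :
  a < k -> a' < a -> exposed T k a -> exposed T k a' ->
  (sig_at T a' <= sig_at T a) && ((sig_at T a' < sig_at T a) || conn_below T k a' a).
Proof.
have [m] := ubnP a; elim: m a => // m IH a; rewrite ltnS => am ak a'a ea ea'.
case: (pickP (fun u => (u, a) \in T)) => [u ua | none].
  have [p pa pmin] := exists_min_neighbor ua.
  have p_lt_a : p < a by have := graph_wf_lt wfT pa.
  rewrite (sig_at_min_neighbor wfT pa pmin).
  have ep := exposed_min_neighbor ncT ea pa p_lt_a pmin.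
  have pa_conn : conn_below T k p a.
    by apply: connect1; rewrite /adj_below /adj pa (ltn_trans p_lt_a ak) ak.
  have : a' <= p.
    by rewrite leqNgt; apply/negP => p_lt_a'; have := ea' p a pa ak; rewrite p_lt_a' a'a.
  rewrite leq_eqVlt => /orP[/eqP a'p | a'_lt_p].
    have -> : a' = p by apply: val_inj.
    by rewrite leqnn ltnn pa_conn.
  have /andP[-> /orP[-> // | c]] :=
    IH p (leq_trans p_lt_a am) (ltn_trans p_lt_a ak) a'_lt_p ep ea'.
  by rewrite /conn_below (connect_trans c pa_conn) orbT.
have noneN u : (u, a) \notin T by rewrite none.
have a_pos : 0 < a by move: a'a; case: (nat_of_ord a).
rewrite (sig_at_no_neighbor noneN a_pos).
have : a' <= a.-1 by rewrite -ltnS prednK.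
rewrite leq_eqVlt => /orP[/eqP -> | a'_lt_a1]; first by rewrite leqnSn ltnSn.
pose a1 : V := Ordinal (leq_ltn_trans (leq_pred a) (ltn_ord a)).
have a1_lt_m : a1 < m by rewrite /= (leq_trans _ am) // ltn_predL.
have a1_lt_k : a1 < k by rewrite /= (leq_ltn_trans (leq_pred a) ak).
have /andP[le _] := IH a1 a1_lt_m a1_lt_k a'_lt_a1 (exposed_pred_no_neighbor ea noneN) ea'.
by rewrite ltnS le (leq_trans le (leqnSn _)).
Qed.

Lemma sig_at_le_pred (k p : V) :
  (p, k) \in T -> (forall u, (u, k) \in T -> p <= u) -> sig_at T k <= sig_at T k.-1.
Proof.
move=> pk pmin; have p_lt_k : p < k by have := graph_wf_lt wfT pk.
rewrite (sig_at_min_neighbor wfT pk pmin).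
pose k1 : V := Ordinal (leq_ltn_trans (leq_pred k) (ltn_ord k)).
have : p <= k1 by rewrite /= -ltnS prednK // (leq_ltn_trans _ p_lt_k).
rewrite leq_eqVlt => /orP[/eqP -> // | p_lt_k1].
have k1_lt_k : k1 < k by rewrite /= ltn_predL (leq_ltn_trans _ p_lt_k).
have ek1 : exposed T k k1 := @exposed_predn T k.
by case/andP: (sig_at_exposed_mono k1_lt_k p_lt_k1 ek1 (exposed_of_edge ncT pk)).
Qed.

End Monotonicity.

Lemma min_neighbor_conn_below T1 T2 (k p1 p2 : V) :
  graph_wf T1 -> noncrossing T1 -> graph_wf T2 -> noncrossing T2 -> agree_below T1 T2 k ->
  (forall v, v < n -> sig_at T1 v = sig_at T2 v) ->
  (p1, k) \in T1 -> (forall u, (u, k) \in T1 -> p1 <= u) ->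
  (p2, k) \in T2 -> (forall u, (u, k) \in T2 -> p2 <= u) -> p1 < p2 ->
  conn_below T1 k p1 p2.
Proof.
move=> wf1 nc1 wf2 nc2 ag sigE p1k p1min p2k p2min p12.
have p2_lt_k : p2 < k by have := graph_wf_lt wf2 p2k.
have := sig_at_exposed_mono wf2 nc2 p2_lt_k p12 (exposed_of_edge nc2 p2k)
  (exposed_agree ag (exposed_of_edge nc1 p1k)).
rewrite -(conn_below_agree ag) -(sigE _ (ltn_ord p1)) -(sig_at_min_neighbor wf1 p1k p1min).
by rewrite (sigE _ (ltn_ord k)) (sig_at_min_neighbor wf2 p2k p2min) ltnn => /andP[].
Qed.

Lemma reducing_seq_of_extra_neighbor G T1 T2 (k p b : V) :
  graph_wf T1 -> noncrossing T1 -> connected T1 -> graph_wf T2 -> noncrossing T2 ->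
  agree_below T1 T2 k -> T1 \subset G -> T2 \subset G ->
  (p, k) \in T1 -> (forall u, (u, k) \in T2 -> p <= u) -> (b, k) \in T2 -> (b, k) \notin T1 ->
  (exists s, reducing_seq G T1 s) \/ (exists s, reducing_seq G T2 s).
Proof.
move=> wf1 nc1 con1 wf2 nc2 ag sub1 sub2 pk pmin bk bNk.
have p_lt_b : p < b.
  rewrite ltn_neqAle pmin // andbT; apply: contraNneq bNk => /val_inj <-.
  exact: pk.
have b_lt_k : b < k by have := graph_wf_lt wf2 bk.
have [a ak ba] := exists_neighbor_conn_below wf1 nc1 con1 pk p_lt_b b_lt_k.
case: (ltngtP a b) => [a_lt_b | b_lt_a | ab].
- left; apply: reducing_seq_of_conn_below wf1 nc1 wf2 nc2 ag ak bk (subsetP sub2 _ bk) a_lt_b _.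
  by rewrite conn_below_sym.
- right; apply: reducing_seq_of_conn_below wf2 nc2 wf1 nc1 (agree_below_sym ag) bk ak
    (subsetP sub1 _ ak) b_lt_a _.
  by rewrite -(conn_below_agree ag).
- by move: bNk; rewrite -(val_inj ab) ak.
Qed.

Lemma left_neighbor_sub G T1 T2 (k : V) :
  noncrossing_tree T1 -> G_reduced G T1 -> noncrossing_tree T2 -> G_reduced G T2 ->
  agree_below T1 T2 k -> (forall v, v < n -> sig_at T1 v = sig_at T2 v) ->
  forall u, (u, k) \in T2 -> (u, k) \in T1.
Proof.
move=> /andP[/and3P[wf1 con1 _] nc1] [sub1 red1] /andP[/and3P[wf2 _ _] nc2] [sub2 red2].
move=> ag sigE u uk.
have sigE' v : v < n -> sig_at T2 v = sig_at T1 v by move=> /sigE ->.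
have [p2 p2k p2min] := exists_min_neighbor uk.
case: (pickP (fun u => (u, k) \in T1)) => [u1 u1k | none]; last first.
  have k_pos : 0 < k by have := graph_wf_lt wf2 p2k; case: (nat_of_ord k).
  have := sig_at_le_pred wf2 nc2 p2k p2min.
  rewrite -(sigE _ (ltn_ord k)) -sigE ?(leq_ltn_trans (leq_pred k)) //.
  by rewrite (sig_at_no_neighbor (fun u => negbT (none u)) k_pos) ltnn.
have [p1 p1k p1min] := exists_min_neighbor u1k.
have p12 : p1 = p2.
  case: (ltngtP p1 p2) => [lt | lt | /val_inj //]; exfalso.
  - have c := min_neighbor_conn_below wf1 nc1 wf2 nc2 ag sigE p1k p1min p2k p2min lt.
    exact: red1 (reducing_seq_of_conn_below wf1 nc1 wf2 nc2 ag p1k p2k (subsetP sub2 _ p2k) lt c).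
  - have ag' := agree_below_sym ag.
    have c := min_neighbor_conn_below wf2 nc2 wf1 nc1 ag' sigE' p2k p2min p1k p1min lt.
    exact: red2 (reducing_seq_of_conn_below wf2 nc2 wf1 nc1 ag' p2k p1k (subsetP sub1 _ p1k) lt c).
rewrite -p12 in p2min; apply: contraT => uNk.
by case: (reducing_seq_of_extra_neighbor wf1 nc1 con1 wf2 nc2 ag sub1 sub2 p1k p2min uk uNk).
Qed.

Lemma exists_first_diff_edge T1 T2 :
  T1 != T2 -> exists u k : V, ((u, k) \in T1) != ((u, k) \in T2) /\ agree_below T1 T2 k.
Proof.
move=> neq.
have /existsP[e0 e0D] : [exists e, (e \in T1) != (e \in T2)].
  apply: contraNT neq => /existsPn same; apply/eqP/setP => e.
  by apply/eqP; move: (same e); rewrite negbK.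
case: (arg_minnP (P := fun e : V * V => (e \in T1) != (e \in T2)) (fun e => val e.2) e0D).
move=> [u k] ukD kmin; exists u, k; split => // x y y_lt_k.
apply/eqP; apply: contraTT y_lt_k => xyD.
by rewrite -leqNgt (kmin (x, y) xyD).
Qed.

End NoncrossingTrees.

Theorem lemma3p12 (n : nat) (G T1 T2 : {set 'I_n * 'I_n}) :
  graph_wf G ->
  noncrossing_tree T1 -> G_reduced G T1 ->
  noncrossing_tree T2 -> G_reduced G T2 ->
  T1 != T2 -> signature T1 != signature T2.
Proof.
move=> _ tree1 red1 tree2 red2 neq; apply/negP => /eqP sigE.
have [u [k [ukD ag]]] := exists_first_diff_edge neq.
have sigE12 := sig_at_signature sigE.
have sigE21 := sig_at_signature (esym sigE).
move: ukD; apply/negP; rewrite negbK; apply/eqP; apply/idP/idP.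
- exact: left_neighbor_sub tree2 red2 tree1 red1 (agree_below_sym ag) sigE21 u.
- exact: left_neighbor_sub tree1 red1 tree2 red2 ag sigE12 u.
Qed.
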